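(* Let $n\ge2$ and let $G_n$ be the $n$-gonal poset. Then $G_n$ is retractable to the 2-chain $C_2$ by an $(n-1)$-fence-reflection, followed by a retraction of the singleton-symmetry if $n$ is even: for an $(n-1)$-fence $F$, $G_n\oslash F\cong C_2$ if $n$ is odd, and $(G_n\oslash F)\oslash C_1\cong C_2$ if $n$ is even, where $C_1$ is the one-element poset.
   Context: $C_2=\{x<y\}$ is the 2-chain and $C_1$ the singleton poset. An $m$-fence is a poset of elements $a_1,\dots,a_m$ with order generated by alternating relations $a_1<a_2>a_3<\cdots a_m$ (lower) or $a_1>a_2<a_3>\cdots a_m$ (upper). The $n$-gonal poset $G_n$ ($n\ge2$) is the $2n$-fence $a_1<a_2>a_3<\cdots<a_{2n}$ with the additional relation $a_{2n}>a_1$, making it cyclic (two layers: $a_{odd}$ minimal, $a_{even}$ maximal); it is the vertex–edge incidence poset of a regular $n$-gon. Notation: $\ell(X)$ is the cardinality of a longest chain. A subset $A$ of a poset $X$ is maximally ordered in $X$ if $|\{(a,b)\in A\times A:a<b\}|$ is maximal among subsets of $X$ of cardinality $|A|$. For $\sigma\in\mathrm{Aut}(P)$, $\Sigma(\sigma)=\{a:\sigma(a)\ne a\}$. For finite $Q$ and $r\ge2$: $\sigma$ is a $(Q,r)$-generator if there exist subsets $S_0,\dots,S_{r-1}\subset\Sigma(\sigma)$, each isomorphic to $Q$, which are smallest maximally ordered subsets of $\Sigma(\sigma)$ with $\sigma(S_i)=S_{(i+1)\bmod r}$, $\ell(S_i)=\ell(\Sigma(\sigma))$, $\bigcup_iS_i=\Sigma(\sigma)$;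 distinct $S_i,S_j$ are $(Q,r)$-symmetric subsets. Elements $a,b$ are $(Q,r,0)$-symmetric if $a=b$; $(Q,r,1)$-symmetric if there are $(Q,r)$-symmetric subsets $A,B$ with generator $\sigma$, $a\in A$, $b=\sigma^q(a)\in B$, $1\le q<r$; for $n\ge2$, $(Q,r,n)$-symmetric if not $(Q,r,j)$-symmetric for $j<n$ but there exist $c$, $j<n$ with $a$ $(Q,r,j)$-symmetric to $c$ and $c$ $(Q,r,n-j)$-symmetric to $b$; $(Q,r)$-symmetric if $(Q,r,n)$-symmetric for some $n\ge0$ (an equivalence relation). $P\oslash_rQ$ is the quotient poset of equivalence classes with $E\le F$ iff some $e\in E$, $f\in F$ satisfy $e\le f$; $P\oslash Q:=P\oslash_2Q$. Retractable to $\tilde P$ means obtained by such a sequence of quotients, with the result not isomorphic to $P$. *)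

From HB Require Import structures.
From mathcomp Require Import all_boot all_fingroup.
Set Implicit Arguments. Unset Strict Implicit. Unset Printing Implicit Defensive.

(* Quotients P (/)_r Q are only relational structures a priori, so no
   axioms are bundled; all concrete posets below are genuine posets. *)
Record fposet := FPoset { carrier :> finType; rle : rel carrier }.

Definition fiso (P Q : fposet) : Prop :=
  exists f : P -> Q, bijective f /\ forall x y, rle (f x) (f y) = rle x y.

Definition C1 : fposet := @FPoset unit (fun _ _ => true).
Definition C2 : fposet := @FPoset bool (fun x y => x ==> y).

(* m-fence on a_1..a_m, encoded as 0..m-1.
   lower (up = false):  a_1 < a_2 > a_3 < ...
   upper (up = true) :  a_1 > a_2 < a_3 > ...
   The order is generated by the covering relations; since they alternate,
   it is just reflexivity plus the covering relations. *)
Definition fence_le (m : nat) (up : bool) (x y : 'I_m) : bool :=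
  (x == y)
  || ((val y == (val x).+1) && (odd x == up))
  || ((val x == (val y).+1) && (odd y != up)).
Definition fence (m : nat) (up : bool) : fposet := @FPoset 'I_m (fence_le up).

(* n-gonal poset G_n: the 2n-fence a_1 < a_2 > ... < a_{2n} plus a_{2n} > a_1;
   a_{i+1} is encoded as i : 'I_(2n); even indices (a_odd) are minimal,
   odd indices (a_even) are maximal, and x < y iff x is minimal, y maximal
   and x, y are cyclically adjacent. *)
Definition gon_le (n : nat) (x y : 'I_(n.*2)) : bool :=
  (x == y)
  || [&& ~~ odd x, odd y &
        (val y == (val x).+1 %% n.*2) || (val x == (val y).+1 %% n.*2)].
Definition G (n : nat) : fposet := @FPoset 'I_(n.*2) (@gon_le n).

Section Notions.
Variable P : fposet.

Definition rlt (x y : P) : bool := rle x y && (x != y).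

Definition is_aut (s : {perm P}) : bool :=
  [forall x, forall y, rle (s x) (s y) == rle x y].

Definition Sigma (s : {perm P}) : {set P} := [set x | s x != x].

Definition is_chain (C : {set P}) : bool :=
  [forall x in C, forall y in C, rle x y || rle y x].

Definition ell (A : {set P}) : nat :=
  \max_(C : {set P} | (C \subset A) && is_chain C) #|C|.

Definition nordered (A : {set P}) : nat :=
  #|[set p : P * P | [&& p.1 \in A, p.2 \in A & rlt p.1 p.2]]|.

Definition maxordered (X A : {set P}) : bool :=
  (A \subset X) &&
  [forall B : {set P}, ((B \subset X) && (#|B| == #|A|)) ==> (nordered B <= nordered A)].

Definition sub_iso (A : {set P}) (Q : fposet) : bool :=
  [exists f : {ffun Q -> P},
     [&& injectiveb f, f @: setT == A &
         [forall x, forall y, rle x y == rle (f x) (f y)]]].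

Definition good_family (r : nat) (s : {perm P}) (S : {ffun 'I_r -> {set P}}) : bool :=
  [forall i, [&& S i \subset Sigma s, maxordered (Sigma s) (S i),
                 ell (S i) == ell (Sigma s) & s @: S i == S (ordS i)]]
  && (\bigcup_i S i == Sigma s).

Definition gen_witness (Q : fposet) (r : nat) (s : {perm P})
    (S : {ffun 'I_r -> {set P}}) : bool :=
  [&& 1 < r, is_aut s, good_family s S, [forall i, sub_iso (S i) Q] &
      [forall S' : {ffun 'I_r -> {set P}},
         good_family s S' ==> [forall i, forall j, #|S i| <= #|S' j|]]].

Definition is_generator (Q : fposet) (r : nat) (s : {perm P}) : bool :=
  [exists S : {ffun 'I_r -> {set P}}, gen_witness Q s S].

Definition sym1 (Q : fposet) (r : nat) : rel P := fun a b =>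
  [exists s : {perm P}, exists S : {ffun 'I_r -> {set P}},
     gen_witness Q s S &&
     [exists i, exists j, exists q : 'I_r,
        [&& S i != S j, a \in S i, b \in S j, 0 < val q & b == iter q s a]]].

(* (Q,r)-symmetry: union over n of (Q,r,n)-symmetry, i.e. the reflexive
   transitive closure of (Q,r,1)-symmetry (the paper proves it is an
   equivalence relation; we take its symmetric part to get the classes). *)
Definition qsym (Q : fposet) (r : nat) (a b : P) : bool :=
  connect (sym1 Q r) a b && connect (sym1 Q r) b a.

Definition symclass (Q : fposet) (r : nat) (a : P) : {set P} :=
  [set b | qsym Q r a b].

Definition qcarrier (Q : fposet) (r : nat) : finType :=
  {C : {set P} | [exists a, C == symclass Q r a]}.

Definition quot (r : nat) (Q : fposet) : fposet :=
  @FPoset (qcarrier Q r)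
    (fun E F => [exists e in val E, exists f in val F, rle e f]).

End Notions.

Arguments quot : clear implicits.

From mathcomp Require Import all_boot all_fingroup zify.
Set Implicit Arguments. Unset Strict Implicit. Unset Printing Implicit Defensive.

(* Let q be an element of G_n (a vertex or an edge of the n-gon).  The
   reflection of the n-gon fixing q and its opposite element q + n is an
   automorphism of G_n that moves exactly two open half-circles; these are
   incomparable (n-1)-fences swapped by the reflection.  Each is maximally
   ordered: it has n - 2 comparable pairs, while a nonempty set of moved
   elements lies on a path and so has fewer comparable pairs than elements.
   So the reflection is an (F,2)-generator and every moved x is symmetric to
   its mirror image.  Centring the reflection at x + 1, or for n odd at
   x + 1 + n, maps x to x + 2, so all elements of one level -- of both levels
   when n is odd -- form a single class, while no symmetry changes the level.
   The quotient is then the complete bipartite poset on its classes: this is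
   C_2 when n is odd, and when n is even the transpositions of two classes of
   the same level are C_1-generators that collapse it onto C_2. *)

Section Automorphisms.
Variable P : fposet.
Implicit Types (s : {perm P}) (A B C : {set P}).

Lemma autP s : is_aut s -> forall x y, rle (s x) (s y) = rle x y.
Proof. by move=> /forallP hs x y; apply/eqP; move/forallP: (hs x). Qed.

Lemma chain_aut s C : is_aut s -> is_chain C -> is_chain (s @: C).
Proof.
move=> hs /forallP hC; apply/forall_inP => _ /imsetP[a aC ->].
apply/forall_inP => _ /imsetP[b bC ->]; rewrite !(autP hs).
exact: (forall_inP (implyP (hC a) aC)).
Qed.

Lemma ell_le_bound A k :
  (forall C, C \subset A -> is_chain C -> #|C| <= k) -> ell A <= k.
Proof. by move=> h; apply/bigmax_leqP => C /andP[]; apply: h. Qed.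

Lemma chain_le_ell A C : C \subset A -> is_chain C -> #|C| <= ell A.
Proof. by move=> CA Cch; apply: leq_bigmax_cond; rewrite CA Cch. Qed.

Lemma ell_sub A B : A \subset B -> ell A <= ell B.
Proof.
by move=> AB; apply: ell_le_bound => C CA; apply: chain_le_ell; apply: subset_trans AB.
Qed.

Lemma ell_aut s A : is_aut s -> ell A <= ell (s @: A).
Proof.
move=> hs; apply: ell_le_bound => C CA Cch; rewrite -(card_imset C (@perm_inj _ s)).
by apply: chain_le_ell; [rewrite imsetS | rewrite chain_aut].
Qed.

Lemma nordered_aut s A : is_aut s -> nordered A <= nordered (s @: A).
Proof.
move=> hs; pose sp (p : P * P) := (s p.1, s p.2).
have sp_inj : injective sp by move=> [a b] [c d] [] /perm_inj -> /perm_inj ->.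
rewrite /nordered -(card_imset _ sp_inj); apply/subset_leq_card/subsetP.
move=> _ /imsetP[[a b] + ->]; rewrite !inE /= => /and3P[aA bA /andP[ab a_b]].
by rewrite !imset_f // /rlt (autP hs) ab (inj_eq perm_inj).
Qed.

Lemma nordered_card_le1 A : #|A| <= 1 -> nordered A = 0.
Proof.
move=> /card_le1_eqP A1; apply/eqP; rewrite cards_eq0; apply/eqP/setP => -[a b].
by rewrite !inE /rlt /=; apply/and3P => -[aA bA /andP[_]]; rewrite (A1 a b aA bA) eqxx.
Qed.

Lemma sub_iso_aut s A (Q : fposet) : is_aut s -> sub_iso A Q -> sub_iso (s @: A) Q.
Proof.
move=> hs /existsP[f /and3P[/injectiveP f_inj /eqP fA /forallP f_rle]].
apply/existsP; exists [ffun x => s (f x)]; apply/and3P; split.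
- by apply/injectiveP => x y; rewrite !ffunE => /perm_inj /f_inj.
- by apply/eqP; rewrite -fA -imset_comp; apply: eq_imset => x; rewrite /= ffunE.
- apply/forallP => x; apply/forallP => y; rewrite !ffunE (autP hs).
  exact: (forallP (f_rle x)).
Qed.

End Automorphisms.

Section PathCounting.
Variable P : fposet.

Lemma nordered_lt_card (B : {set P}) (d : P -> nat) :
  {in B &, injective d} ->
  (forall a b, a \in B -> b \in B -> rlt a b -> (d b == (d a).+1) || (d a == (d b).+1)) ->
  (forall a b : P, rlt a b -> ~~ rlt b a) ->
  B != set0 -> nordered B < #|B|.
Proof.
move=> d_inj d_adj rlt_asym /set0Pn[b0 b0B].
have [m mB m_max] := @arg_maxnP _ b0 (mem B) d b0B.
have {}mB : m \in B := mB.
pose pairs := [set p : P * P | [&& p.1 \in B, p.2 \in B & rlt p.1 p.2]].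
have pairsP p : p \in pairs ->
    [/\ p.1 \in B, p.2 \in B, rlt p.1 p.2 & (d p.2 == (d p.1).+1) || (d p.1 == (d p.2).+1)].
  by rewrite inE => /and3P[aB bB ab]; split=> //; apply: d_adj.
pose low (p : P * P) := if d p.1 < d p.2 then p.1 else p.2.
have low_inj : {in pairs &, injective low}.
  move=> [a b] [a' b'] /pairsP[aB bB ab dab] /pairsP[a'B b'B a'b' da'b'].
  rewrite /low /= in aB bB ab dab a'B b'B a'b' da'b' *.
  case: ltnP => lt1; case: ltnP => lt2 eq_low; subst.
  - by congr pair; apply: d_inj => //; lia.
  - have e : b = a' by apply: d_inj => //; lia.
    by subst; move: (rlt_asym _ _ ab); rewrite a'b'.
  - have e : a = b' by apply: d_inj => //; lia.
    by subst; move: (rlt_asym _ _ ab); rewrite a'b'.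
  - by congr pair; apply: d_inj => //; lia.
have low_sub : low @: pairs \subset B :\ m.
  apply/subsetP => _ /imsetP[[a b] /pairsP[aB bB _ dab] ->].
  rewrite /low !inE /= in aB bB dab *; case: ltnP => lt.
    by rewrite aB andbT; apply/eqP => e; move: lt (m_max _ bB); rewrite e; lia.
  by rewrite bB andbT; apply/eqP => e; move: lt dab (m_max _ aB); rewrite e; lia.
rewrite /nordered -/pairs -(card_in_imset low_inj) (cardsD1 m B) mB.
exact: subset_leq_card.
Qed.

Lemma nordered_ge_path (A : {set P}) (f : nat -> P) m :
  (forall i j, i <= m -> j <= m -> (f i == f j) = (i == j)) ->
  (forall i, i <= m -> f i \in A) ->
  (forall i, i < m -> rle (f i) (f i.+1) || rle (f i.+1) (f i)) ->
  m <= nordered A.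
Proof.
move=> f_eq fA f_comp.
pose edge (i : 'I_m) := if rle (f i) (f i.+1) then (f i, f i.+1) else (f i.+1, f i).
have edge_inj : injective edge.
  move=> i j; have := ltn_ord i; have := ltn_ord j; rewrite /edge => lt_j lt_i.
  case: ifP => _; case: ifP => _ [/eqP e1 /eqP e2]; apply: val_inj => /=;
  by move: e1 e2; rewrite !f_eq; lia.
have <- : #|edge @: [set: 'I_m]| = m by rewrite card_imset // cardsE card_ord.
apply/subset_leq_card/subsetP => _ /imsetP[i _ ->]; have lt_i := ltn_ord i.
have f_neq : f i != f i.+1 by rewrite f_eq //; lia.
rewrite inE /edge /rlt; have := f_comp i lt_i.
by case: ifP => [le_i _ | _ le_i]; rewrite /= !fA ?le_i ?(eq_sym (f i.+1)) ?f_neq //; lia.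
Qed.
End PathCounting.

Lemma ord2_cases (i : 'I_2) : i = ord0 \/ i = ord_max.
Proof. by case: i => -[|[|//]] i2; [left | right]; apply: val_inj. Qed.

Lemma ordS_ord0_2 : ordS (ord0 : 'I_2) = ord_max. Proof. exact: val_inj. Qed.
Lemma ordS_ord_max_2 : ordS (ord_max : 'I_2) = ord0. Proof. exact: val_inj. Qed.

Section InvolutionGenerator.
Variables (P Q : fposet) (s : {perm P}) (A : {set P}).
Hypotheses (s_aut : is_aut s) (sK : involutive s).
Hypothesis SigmaE : Sigma s = A :|: s @: A.
Hypothesis A_disj : [disjoint A & s @: A].
Hypothesis A_incomp : forall a b, a \in A -> b \in s @: A -> ~~ rle a b.
Hypothesis A_max : maxordered (Sigma s) A.
Hypothesis A_iso : sub_iso A Q.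

Lemma mem_imset_invol (B : {set P}) x : (x \in s @: B) = (s x \in B).
Proof. by rewrite -{1}(sK x) mem_imset //; apply: perm_inj. Qed.

Lemma imset_invol (B : {set P}) : s @: (s @: B) = B.
Proof. by apply/setP => x; rewrite !mem_imset_invol sK. Qed.

Lemma card_imset_invol (B : {set P}) : #|s @: B| = #|B|.
Proof. by apply: card_imset; apply: perm_inj. Qed.

Lemma ell_imset_invol (B : {set P}) : ell (s @: B) = ell B.
Proof.
have := ell_aut (s @: B) s_aut; rewrite imset_invol => le_sB_B.
by apply/eqP; rewrite eqn_leq le_sB_B ell_aut.
Qed.

Lemma A_sub_Sigma : A \subset Sigma s.
Proof. by rewrite SigmaE subsetUl. Qed.

Lemma sA_sub_Sigma : s @: A \subset Sigma s.
Proof. by rewrite SigmaE subsetUr. Qed.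

Lemma rle_A_sA a b : a \in A -> b \in s @: A -> ~~ rle a b && ~~ rle b a.
Proof.
move=> aA bsA; rewrite A_incomp //= -(autP s_aut) A_incomp //.
  by rewrite -mem_imset_invol.
by rewrite mem_imset_invol sK.
Qed.

Lemma ell_A : ell A = ell (Sigma s).
Proof.
apply/eqP; rewrite eqn_leq ell_sub ?A_sub_Sigma //=.
apply: ell_le_bound => C CS Cch; have [CA | /subsetPn[b bC bA]] := boolP (C \subset A).
  exact: chain_le_ell.
have bsA : b \in s @: A by move: (subsetP CS b bC); rewrite SigmaE inE (negbTE bA).
have CsA : C \subset s @: A.
  apply/subsetP => c cC; move: (subsetP CS c cC); rewrite SigmaE inE.
  case/orP=> [cA|//]; have /andP[/negbTE cb /negbTE bc] := rle_A_sA cA bsA.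
  by move/forall_inP: Cch => /(_ c cC) /forall_inP /(_ b bC); rewrite cb bc.
by rewrite -ell_imset_invol; apply: chain_le_ell.
Qed.

Lemma sA_max : maxordered (Sigma s) (s @: A).
Proof.
move/andP: A_max => [_ /forallP Amax]; rewrite /maxordered sA_sub_Sigma.
apply/forallP => B; rewrite card_imset_invol; apply/implyP => hB.
exact: leq_trans (implyP (Amax B) hB) (nordered_aut _ s_aut).
Qed.

Definition invol_family : {ffun 'I_2 -> {set P}} :=
  [ffun i => if i == ord0 then A else s @: A].

Lemma invol_family0 : invol_family ord0 = A.
Proof. by rewrite ffunE. Qed.

Lemma invol_family1 : invol_family ord_max = s @: A.
Proof. by rewrite ffunE. Qed.

Lemma good_invol_family : good_family s invol_family.
Proof.
apply/andP; split.
  apply/forallP => i; have [-> | ->] := ord2_cases i.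
    by rewrite ordS_ord0_2 invol_family0 invol_family1 A_sub_Sigma A_max ell_A !eqxx.
  rewrite ordS_ord_max_2 invol_family0 invol_family1 sA_sub_Sigma sA_max imset_invol.
  by rewrite ell_imset_invol ell_A !eqxx.
apply/eqP/setP => x; rewrite SigmaE; apply/bigcupP/setUP => [[i _] | [xA | xsA]].
- by have [-> | ->] := ord2_cases i; rewrite ?invol_family0 ?invol_family1; [left | right].
- by exists ord0; rewrite ?invol_family0.
- by exists ord_max; rewrite ?invol_family1.
Qed.

(* A good family of size 2 is swapped by s, so its two members have equal size
   and together cover Sigma s, which has 2 #|A| elements. *)
Lemma invol_family_min (S : {ffun 'I_2 -> {set P}}) (i j : 'I_2) :
  good_family s S -> #|invol_family i| <= #|S j|.
Proof.
case/andP=> /forallP S_good /eqP S_cover.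
have card_S k : #|S k| = #|S ord0|.
  have [-> //| ->] := ord2_cases k.
  have /and4P[_ _ _ /eqP] := S_good ord0; rewrite ordS_ord0_2 => <-.
  by rewrite card_imset_invol.
have card_Sigma : #|Sigma s| <= #|S ord0| + #|S ord_max|.
  rewrite -S_cover; apply: leq_trans (leq_card_setU _ _); apply/subset_leq_card.
  by apply/bigcupsP => k _; have [-> | ->] := ord2_cases k; rewrite ?subsetUl ?subsetUr.
have card_i : #|invol_family i| = #|A|.
  by have [-> | ->] := ord2_cases i; rewrite ?invol_family0 ?invol_family1 ?card_imset_invol.
move: card_Sigma; rewrite card_i SigmaE cardsU (disjoint_setI0 A_disj) cards0.
by rewrite subn0 card_imset_invol (card_S j) (card_S ord_max); lia.
Qed.

Lemma invol_gen_witness : gen_witness Q s invol_family.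
Proof.
apply/and5P; split=> //; first exact: good_invol_family.
  apply/forallP => i; have [-> | ->] := ord2_cases i; first by rewrite invol_family0.
  by rewrite invol_family1 sub_iso_aut.
apply/forallP => S; apply/implyP => S_good.
by apply/forallP => i; apply/forallP => j; apply: invol_family_min.
Qed.

Lemma sym1_invol x : x \in Sigma s -> sym1 Q 2 x (s x).
Proof.
move=> xS; apply/existsP; exists s; apply/existsP; exists invol_family.
rewrite invol_gen_witness /=.
have A_neq_sA : A != s @: A.
  apply: contraTneq xS => A_sA; rewrite SigmaE -A_sA setUid.
  by move: A_disj; rewrite -A_sA -setI_eq0 setIid => /eqP ->; rewrite inE.
move: xS; rewrite SigmaE => /setUP[xA | xsA].
  apply/existsP; exists ord0; apply/existsP; exists ord_max; apply/existsP; exists ord_max.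
  by rewrite invol_family0 invol_family1 A_neq_sA xA mem_imset_invol sK xA /=.
apply/existsP; exists ord_max; apply/existsP; exists ord0; apply/existsP; exists ord_max.
by rewrite invol_family0 invol_family1 eq_sym A_neq_sA xsA -mem_imset_invol xsA /=.
Qed.

End InvolutionGenerator.

Definition complete_bipartite (P : fposet) (lev : P -> bool) : Prop :=
  forall x y : P, rle x y = (x == y) || (~~ lev x && lev y).

Lemma complete_bipartite_fiso_C2 (P : fposet) (lev : P -> bool) :
  complete_bipartite lev -> bijective lev -> fiso P C2.
Proof.
move=> lev_rle lev_bij; exists lev; split=> // x y.
rewrite lev_rle -(inj_eq (bij_inj lev_bij) x y) /=.
by case: (lev x); case: (lev y).
Qed.

Section Levels.
Variables (P : fposet) (lev : P -> bool).
Hypothesis rle_lev : forall x y : P, rle x y -> (x == y) || (~~ lev x && lev y).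
Hypothesis lev_lower : forall y : P, lev y -> exists2 x, x != y & rle x y.

Lemma levE y : lev y = [exists x, (x != y) && rle x y].
Proof.
apply/idP/existsP => [/lev_lower[x xy le_xy] | [x /andP[xy /rle_lev]]].
  by exists x; rewrite xy.
by rewrite (negbTE xy) => /andP[].
Qed.

Lemma lev_aut (s : {perm P}) : is_aut s -> forall x, lev (s x) = lev x.
Proof.
move=> s_aut y; rewrite !levE; apply/existsP/existsP => -[x /andP[xy le_xy]].
  exists (s^-1 x)%g; rewrite -(autP s_aut) permKV le_xy andbT.
  by apply: contraNneq xy => <-; rewrite permKV.
by exists (s x); rewrite (autP s_aut) (inj_eq perm_inj) xy.
Qed.

Lemma sym1_lev Q r a b : sym1 Q r a b -> lev a = lev b.
Proof.
case/existsP => s /existsP[S /andP[/and5P[_ s_aut _ _ _]]].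
case/existsP => i /existsP[j /existsP[q /and5P[_ _ _ _ /eqP ->]]].
by elim: (val q) => //= k ->; rewrite (lev_aut s_aut).
Qed.

Lemma qsym_lev Q r a b : qsym Q r a b -> lev a = lev b.
Proof.
by case/andP=> ab _; apply: (closed_connect (a := lev)) ab => x y /sym1_lev.
Qed.

End Levels.

Section Quotient.
Variables (P Q : fposet) (r : nat).
Local Notation qsym := (@qsym P Q r).
Local Notation symclass := (@symclass P Q r).

Lemma qsym_refl a : qsym a a.
Proof. by rewrite /qsym connect0. Qed.

Lemma qsym_sym a b : qsym a b = qsym b a.
Proof. by rewrite /qsym andbC. Qed.

Lemma qsym_trans b a c : qsym a b -> qsym b c -> qsym a c.
Proof.
case/andP=> ab ba /andP[bc cb].
by rewrite /qsym (connect_trans ab bc) (connect_trans cb ba).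
Qed.

Lemma symclass_eq a b : qsym a b -> symclass a = symclass b.
Proof.
move=> ab; apply/setP => c; rewrite !inE; apply/idP/idP => [ac | bc].
  by apply: qsym_trans ac; rewrite qsym_sym.
exact: qsym_trans ab bc.
Qed.

Lemma symclass_is_class a : [exists b, symclass a == symclass b].
Proof. by apply/existsP; exists a. Qed.

Definition qclass (a : P) : quot P r Q := exist _ (symclass a) (symclass_is_class a).

Lemma qclassP (E : quot P r Q) : exists a, E = qclass a.
Proof.
by case: E => C C_cls; case/existsP: (C_cls) => a /eqP C_a; exists a; apply: val_inj.
Qed.

Lemma qclass_eq a b : (qclass a == qclass b) = qsym a b.
Proof.
rewrite -val_eqE /=; apply/idP/idP => [/eqP ab | /symclass_eq ->//].
have : b \in symclass a by rewrite ab inE qsym_refl.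
by rewrite inE.
Qed.

Section QuotientLevels.
Variable lev : P -> bool.
Hypothesis rle_refl : forall x : P, rle x x.
Hypothesis rle_lev : forall x y : P, rle x y -> (x == y) || (~~ lev x && lev y).
Hypothesis lev_lower : forall y : P, lev y -> exists2 x, x != y & rle x y.

Definition levq (E : quot P r Q) : bool := [exists x in val E, lev x].

Lemma levq_qclass a : levq (qclass a) = lev a.
Proof.
apply/exists_inP/idP => [[x] | la]; last by exists a; rewrite // inE qsym_refl.
by rewrite inE => /(qsym_lev rle_lev lev_lower) ->.
Qed.

Lemma levels_meet_of_connected c :
  (forall x y, lev x = c -> lev y = c -> connect (sym1 Q r) x y) ->
  (forall x, ~~ lev x -> exists2 y, lev y & rle x y) ->
  forall a b, ~~ lev a -> lev b -> exists a' b', [&& qsym a a', qsym b b' & rle a' b'].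
Proof.
move=> c_conn lev_upper a b la lb.
have c_qsym x y : lev x = c -> lev y = c -> qsym x y by move=> *; rewrite /qsym !c_conn.
case: c {c_conn} c_qsym => c_qsym.
  have [y ly ay] := lev_upper a la.
  by exists a, y; rewrite qsym_refl c_qsym.
have [x xb xb_le] := lev_lower lb.
have lx : lev x = false by move: (rle_lev xb_le); rewrite (negbTE xb) => /andP[/negbTE].
by exists x, b; rewrite qsym_refl c_qsym ?(negbTE la).
Qed.

Lemma levq_bij :
  (forall x y, lev x = lev y -> connect (sym1 Q r) x y) ->
  (exists x, ~~ lev x) -> (exists y, lev y) -> bijective levq.
Proof.
move=> lev_conn [x0 lx0] [y0 ly0].
have lev_x0 : lev x0 = false by apply: negbTE.
exists (fun c => qclass (if c then y0 else x0)) => [E | []]; rewrite ?levq_qclass //.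
have [a ->] := qclassP E; rewrite levq_qclass; apply/eqP; rewrite qclass_eq /qsym.
by rewrite !lev_conn //; case: (lev a).
Qed.

Hypothesis levels_meet :
  forall a b, ~~ lev a -> lev b -> exists a' b', [&& qsym a a', qsym b b' & rle a' b'].

Lemma quot_complete_bipartite : complete_bipartite levq.
Proof.
move=> E F; have [a ->] := qclassP E; have [b ->] := qclassP F.
rewrite !levq_qclass qclass_eq /=.
apply/exists_inP/idP => [[a' aa' /exists_inP[b' bb' /rle_lev]] | ].
  rewrite !inE in aa' bb'; case/orP => [/eqP a'b' | /andP[la' lb']].
    by subst b'; apply/orP; left; apply: (qsym_trans aa'); rewrite qsym_sym.
  rewrite (qsym_lev rle_lev lev_lower aa') (qsym_lev rle_lev lev_lower bb').
  by rewrite la' lb' orbT.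
case/orP => [ab | /andP[la lb]].
  exists a; first by rewrite inE qsym_refl.
  by apply/exists_inP; exists a; rewrite ?rle_refl // inE qsym_sym.
have [a' [b' /and3P[aa' bb' a'b']]] := levels_meet la lb.
by exists a'; rewrite ?inE //; apply/exists_inP; exists b'; rewrite ?inE.
Qed.

End QuotientLevels.

End Quotient.

Lemma sub_iso_set1_C1 (P : fposet) (x : P) : rle x x -> sub_iso [set x] C1.
Proof.
move=> xx; apply/existsP; exists [ffun _ => x]; apply/and3P; split.
- by apply/injectiveP => -[] [].
- apply/eqP/setP => y; rewrite inE.
  by apply/imsetP/eqP => [[? _ ->] | ->]; [rewrite ffunE | exists tt; rewrite ?ffunE].
- by apply/forallP => -[]; apply/forallP => -[]; rewrite !ffunE xx.
Qed.

Section CompleteBipartite.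
Variables (P : fposet) (lev : P -> bool).
Hypothesis lev_rle : complete_bipartite lev.

Lemma tperm_aut x y : lev x = lev y -> is_aut (tperm x y).
Proof.
move=> lxy; have lev_t z : lev (tperm x y z) = lev z by case: tpermP => // ->.
by apply/forallP => a; apply/forallP => b; rewrite !lev_rle (inj_eq perm_inj) !lev_t.
Qed.

Lemma sym1_C1_same_level x y : x != y -> lev x = lev y -> sym1 C1 2 x y.
Proof.
move=> xy lxy; set t := tperm x y.
have tx : t @: [set x] = [set y] by rewrite imset_set1 tpermL.
have SigmaE : Sigma t = [set x] :|: t @: [set x].
  apply/setP => z; rewrite tx !inE /t.
  by case: tpermP => [-> | -> | /eqP/negPf -> /eqP/negPf ->]; rewrite ?eqxx ?orbT // eq_sym.
rewrite -[y](tpermL x y); apply: (sym1_invol (A := [set x])).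
- exact: tperm_aut.
- exact: tpermK.
- exact: SigmaE.
- by rewrite tx disjoints1 inE.
- by move=> a b; rewrite tx !inE => /eqP -> /eqP ->; rewrite lev_rle (negbTE xy) lxy andNb.
- rewrite /maxordered SigmaE subsetUl; apply/forallP => B; apply/implyP.
  by case/andP=> _ /eqP B1; rewrite nordered_card_le1 // B1 cards1.
- by apply: sub_iso_set1_C1; rewrite lev_rle eqxx.
- by rewrite SigmaE !inE eqxx.
Qed.

Lemma complete_bipartite_quot_C1 :
  (exists x, ~~ lev x) -> (exists y, lev y) -> fiso (quot P 2 C1) C2.
Proof.
move=> [x0 lx0] ex_upper.
have rle_refl (x : P) : rle x x by rewrite lev_rle eqxx.
have rle_lev (x y : P) : rle x y -> (x == y) || (~~ lev x && lev y) by rewrite lev_rle.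
have lev_lower (y : P) : lev y -> exists2 x, x != y & rle x y.
  by move=> ly; exists x0; [apply: contraNneq lx0 => -> | rewrite lev_rle lx0 ly orbT].
have lev_conn x y : lev x = lev y -> connect (sym1 C1 2) x y.
  move=> lxy; have [-> | xy] := eqVneq x y; first exact: connect0.
  exact/connect1/sym1_C1_same_level.
have meet a b : ~~ lev a -> lev b ->
    exists a' b', [&& qsym C1 2 a a', qsym C1 2 b b' & rle a' b'].
  by move=> la lb; exists a, b; rewrite !qsym_refl lev_rle la lb orbT.
apply: complete_bipartite_fiso_C2 (quot_complete_bipartite rle_refl rle_lev lev_lower meet) _.
by apply: levq_bij rle_lev lev_lower lev_conn _ ex_upper; exists x0.
Qed.

End CompleteBipartite.

Lemma modn_cases a N : a < N.*2 -> (a < N /\ a %% N = a) \/ (N <= a /\ a %% N = a - N).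
Proof.
move=> lt_a; case: (ltnP a N) => [lt | le]; [left | right]; split=> //.
  exact: modn_small.
by rewrite -{1}(subnK le) modnDr modn_small // ltn_subLR // addnn.
Qed.

(* Replaces every innermost [a %% M] of the goal by [a] or [a - M], provided
   [lia] shows [a < 2 M]. *)
Ltac case_mod M := repeat match goal with
  | |- context [?a %% M] =>
    lazymatch a with context [_ %% M] => fail | _ => idtac end;
    case: (@modn_cases a M ltac:(lia)) => [[? ->] | [? ->]]
  end.

Section Polygon.
Variable n : nat.
Hypothesis n_gt1 : 1 < n.
Local Notation N := n.*2.
Implicit Types x y : G n.

Lemma double_gt0 : 0 < N. Proof. lia. Qed.

Lemma G_refl x : rle x x.
Proof. by rewrite /= /gon_le eqxx. Qed.

Lemma G_rle_lev x y : rle x y -> (x == y) || (~~ odd x && odd y).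
Proof. by case/orP => [-> | /and3P[-> -> _]]; rewrite ?orbT. Qed.

Lemma G_lower y : odd y -> exists2 x : G n, x != y & rle x y.
Proof.
move=> odd_y; have lt_y := ltn_ord y; have lt_x : y.-1 < N by lia.
by exists (Ordinal lt_x); rewrite /= /gon_le -!val_eqE /=; case_mod n.*2; lia.
Qed.

Lemma G_upper x : ~~ odd x -> exists2 y : G n, odd y & rle x y.
Proof.
move=> even_x; have lt_x := ltn_ord x; have lt_y : x.+1 < N by lia.
exists (Ordinal lt_y); first by rewrite /=; lia.
by rewrite /= /gon_le -!val_eqE /=; case_mod n.*2; lia.
Qed.

Lemma G_rlt_asym x y : rlt x y -> ~~ rlt y x.
Proof.
case/andP => /G_rle_lev; rewrite eq_sym => /orP[-> // | /andP[ev_x od_y] _].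
by apply/negP => /andP[/G_rle_lev]; rewrite od_y (negbTE ev_x) eq_sym => /orP[->|].
Qed.

Section Reflection.
Variable q : G n.

Definition offset x : nat := (x + N - q) %% N.
Definition at_offset (w : nat) : G n := Ordinal (ltn_pmod (q + w) double_gt0).

Lemma offset_lt x : offset x < N.
Proof. exact: ltn_pmod double_gt0. Qed.

Lemma offset_at w : w < N -> offset (at_offset w) = w.
Proof. by move=> lt_w; have lt_q := ltn_ord q; rewrite /offset /=; case_mod n.*2; lia. Qed.

Lemma at_offsetK x : at_offset (offset x) = x.
Proof.
have lt_x := ltn_ord x; have lt_q := ltn_ord q.
by apply: val_inj; rewrite /offset /=; case_mod n.*2; lia.
Qed.

Lemma offset_inj : injective offset.
Proof. exact: can_inj at_offsetK. Qed.

Lemma odd_offset x : odd (offset x) = (odd x != odd q).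
Proof.
have lt_x := ltn_ord x; have lt_q := ltn_ord q.
by rewrite /offset; case_mod n.*2; lia.
Qed.

Lemma next_offset x y : (val y == (val x).+1 %% N) = (offset y == (offset x).+1 %% N).
Proof.
have lt_x := ltn_ord x; have lt_y := ltn_ord y; have lt_q := ltn_ord q.
by rewrite /offset /=; case_mod n.*2; lia.
Qed.

Lemma rle_offset x y : rle x y =
  (x == y) || [&& ~~ odd x, odd y &
                 (offset y == (offset x).+1 %% N) || (offset x == (offset y).+1 %% N)].
Proof. by rewrite /= /gon_le !next_offset. Qed.

Definition mirror x : G n := at_offset ((N - offset x) %% N).

Lemma offset_mirror x : offset (mirror x) = (N - offset x) %% N.
Proof. by rewrite offset_at // ltn_pmod // double_gt0. Qed.

Lemma mirrorK : involutive mirror.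
Proof.
move=> x; have lt_x := offset_lt x; apply: offset_inj; rewrite !offset_mirror.
by case_mod n.*2; lia.
Qed.

Lemma odd_mirror x : odd (mirror x) = odd x.
Proof.
have lt_x := offset_lt x; move: (odd_offset (mirror x)) (odd_offset x).
by rewrite offset_mirror; case_mod n.*2; lia.
Qed.

Definition mirror_perm : {perm G n} := perm (can_inj mirrorK).

Lemma mirror_permE x : mirror_perm x = mirror x.
Proof. by rewrite permE. Qed.

Lemma mirror_permK : involutive mirror_perm.
Proof. by move=> x; rewrite !mirror_permE mirrorK. Qed.

Lemma mirror_next x y :
  (offset (mirror y) == (offset (mirror x)).+1 %% N) = (offset x == (offset y).+1 %% N).
Proof.
have lt_x := offset_lt x; have lt_y := offset_lt y.
by rewrite !offset_mirror; case_mod n.*2; lia.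
Qed.

Lemma mirror_aut : is_aut mirror_perm.
Proof.
apply/forallP => x; apply/forallP => y; apply/eqP.
rewrite !mirror_permE !rle_offset !odd_mirror (can_eq mirrorK) !mirror_next.
by rewrite [X in [&& _, _ & X]]orbC.
Qed.

Definition arc : {set G n} := [set x | 0 < offset x < n].

Lemma mem_mirror_arc x : (x \in mirror_perm @: arc) = (n < offset x).
Proof.
rewrite (mem_imset_invol mirror_permK) mirror_permE inE offset_mirror.
by have lt_x := offset_lt x; case_mod n.*2; lia.
Qed.

Lemma Sigma_mirror : Sigma mirror_perm = arc :|: mirror_perm @: arc.
Proof.
apply/setP => x; rewrite in_setU mem_mirror_arc !inE mirror_permE.
rewrite -(inj_eq offset_inj) offset_mirror.
by have lt_x := offset_lt x; case_mod n.*2; lia.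
Qed.

Lemma arc_disjoint : [disjoint arc & mirror_perm @: arc].
Proof. by apply/pred0P => x /=; rewrite mem_mirror_arc inE; lia. Qed.

Lemma arc_incomp a b : a \in arc -> b \in mirror_perm @: arc -> ~~ rle a b.
Proof.
rewrite mem_mirror_arc inE rle_offset -(inj_eq offset_inj) => a_arc b_arc.
have lt_a := offset_lt a; have lt_b := offset_lt b.
by case_mod n.*2; lia.
Qed.

Definition arc_at (i : nat) : G n := at_offset i.+1.

Lemma offset_arc_at i : i < n.-1 -> offset (arc_at i) = i.+1.
Proof. by move=> lt_i; rewrite offset_at //; lia. Qed.

Lemma odd_arc_at i : i < n.-1 -> odd (arc_at i) = (odd i == odd q).
Proof. by move=> lt_i; have := odd_offset (arc_at i); rewrite offset_arc_at //; lia. Qed.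

Lemma rle_arc_at (i j : 'I_n.-1) : rle (arc_at i) (arc_at j) = fence_le (~~ odd q) i j.
Proof.
have lt_i := ltn_ord i; have lt_j := ltn_ord j.
rewrite rle_offset -(inj_eq offset_inj) !offset_arc_at ?odd_arc_at //.
rewrite !modn_small ?eqSS; try lia.
by rewrite /fence_le -!val_eqE /=; case: (odd q); lia.
Qed.

Lemma arc_sub_iso : sub_iso arc (fence n.-1 (~~ odd q)).
Proof.
apply/existsP; exists [ffun i : 'I_n.-1 => arc_at i]; apply/and3P; split.
- apply/injectiveP => i j; rewrite !ffunE => /(congr1 offset).
  by rewrite !offset_arc_at // => -[] /val_inj.
- apply/eqP/setP => x; apply/imsetP/idP => [[i _ ->] | ].
    by rewrite ffunE inE offset_arc_at //; have := ltn_ord i; lia.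
  rewrite inE => /andP[x_gt0 x_lt]; have lt_i : (offset x).-1 < n.-1 by lia.
  exists (Ordinal lt_i) => //; rewrite ffunE; apply: offset_inj.
  by rewrite offset_arc_at //=; lia.
- by apply/forallP => i; apply/forallP => j; rewrite !ffunE rle_arc_at.
Qed.

Lemma card_arc : #|arc| = n.-1.
Proof.
case/existsP: arc_sub_iso => f /and3P[/injectiveP f_inj /eqP <- _].
by rewrite card_imset // cardsE card_ord.
Qed.

Lemma nordered_arc : n.-2 <= nordered arc.
Proof.
apply: (@nordered_ge_path _ _ arc_at) => [i j le_i le_j | i le_i | i lt_i].
- by rewrite -(inj_eq offset_inj) !offset_arc_at; lia.
- by rewrite inE offset_arc_at; lia.
have lt_i0 : i < n.-1 by lia.
have lt_i1 : i.+1 < n.-1 by lia.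
rewrite (rle_arc_at (Ordinal lt_i0) (Ordinal lt_i1)).
rewrite (rle_arc_at (Ordinal lt_i1) (Ordinal lt_i0)).
by rewrite /fence_le -!val_eqE /=; lia.
Qed.

Lemma arc_maxordered : maxordered (Sigma mirror_perm) arc.
Proof.
rewrite /maxordered Sigma_mirror subsetUl; apply/forallP => B; apply/implyP.
case/andP => /subsetP B_sub /eqP card_B.
have B_n0 : B != set0 by rewrite -card_gt0 card_B card_arc; lia.
suff : nordered B < #|B| by rewrite card_B card_arc; have := nordered_arc; lia.
apply: (nordered_lt_card (d := offset)) => //.
- by move=> a b _ _; apply: offset_inj.
- move=> a b aB bB; move: (B_sub a aB) (B_sub b bB).
  rewrite !in_setU !mem_mirror_arc !inE /rlt rle_offset -!(inj_eq offset_inj).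
  have lt_a := offset_lt a; have lt_b := offset_lt b.
  by case_mod n.*2; lia.
- exact: G_rlt_asym.
Qed.

Lemma sym1_mirror x :
  x \in Sigma mirror_perm -> sym1 (fence n.-1 (~~ odd q)) 2 x (mirror x).
Proof.
rewrite -mirror_permE; exact: (sym1_invol mirror_aut mirror_permK Sigma_mirror
  arc_disjoint arc_incomp arc_maxordered arc_sub_iso).
Qed.

End Reflection.

Definition next2 x : G n := Ordinal (ltn_pmod x.+2 double_gt0).

Lemma offset_next2 q x : offset q (next2 x) = (offset q x).+2 %% N.
Proof.
have lt_x := ltn_ord x; have lt_q := ltn_ord q.
by rewrite /offset /=; case_mod n.*2; lia.
Qed.

Lemma sym1_next2 (q x : G n) : (val q == x.+1 %% N) || (val q == (x.+1 + n) %% N) ->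
  sym1 (fence n.-1 (~~ odd q)) 2 x (next2 x).
Proof.
move=> q_x; have lt_x := ltn_ord x; have lt_q := ltn_ord q.
have offset_x : (offset q x == n.-1) || (offset q x == N.-1).
  by move: q_x; rewrite /offset /=; case_mod n.*2; lia.
clear q_x; have -> : next2 x = mirror q x.
  apply: (@offset_inj q); rewrite offset_mirror offset_next2.
  by case/orP: offset_x => /eqP ->; case_mod n.*2; lia.
apply: sym1_mirror; rewrite Sigma_mirror in_setU mem_mirror_arc inE; lia.
Qed.

Lemma val_iter_next2 k x : (iter k next2 x : nat) = (x + k.*2) %% N.
Proof.
elim: k => [|k /= ->]; first by rewrite addn0 modn_small.
by rewrite doubleS -(addn2 (_ %% N)) modnDml addn2 !addnS.
Qed.

Lemma connect_next2 (e : rel (G n)) (p : bool) :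
  (forall x, odd x = p -> e x (next2 x)) ->
  forall x y, odd x = p -> odd y = p -> connect e x y.
Proof.
move=> e_next2 x y odd_x odd_y.
have odd_iter k : odd (iter k next2 x) = p.
  by rewrite val_iter_next2 odd_mod ?odd_double //; lia.
have reach k : connect e x (iter k next2 x).
  elim: k => // k reach_k; apply: connect_trans reach_k (connect1 _).
  by rewrite iterS e_next2.
have lt_x := ltn_ord x; have lt_y := ltn_ord y.
have -> : y = iter ((y + N - x) %% N)./2 next2 x.
  apply: val_inj; rewrite /= val_iter_next2 halfK.
  by move: odd_x odd_y; case_mod n.*2; lia.
exact: reach.
Qed.

Lemma G_level_connected (up p : bool) : (p == up) || odd n ->
  forall x y : G n, odd x = p -> odd y = p -> connect (sym1 (fence n.-1 up) 2) x y.
Proof.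
move=> p_up; apply: connect_next2 => x odd_x; have lt_x := ltn_ord x.
have [q q_x /eqP <-] : exists2 q : G n,
    (val q == x.+1 %% N) || (val q == (x.+1 + n) %% N) & ~~ odd q == up.
  have [x_up | x_up] := eqVneq (odd x) up.
    exists (Ordinal (ltn_pmod x.+1 double_gt0)); first by apply/orP; left.
    by rewrite /=; case_mod n.*2; lia.
  exists (Ordinal (ltn_pmod (x.+1 + n) double_gt0)); first by apply/orP; right.
  by move: p_up; rewrite /=; case_mod n.*2; lia.
exact: sym1_next2.
Qed.

Lemma G_quot_complete_bipartite up :
  complete_bipartite (levq (Q := fence n.-1 up) (r := 2) (fun x : G n => odd x)).
Proof.
apply: quot_complete_bipartite G_refl G_rle_lev G_lower _.
apply: (levels_meet_of_connected G_rle_lev G_lower (c := up)) => [x y | x].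
  by apply: G_level_connected; rewrite eqxx.
exact: G_upper.
Qed.

End Polygon.

Theorem mainTheorem9 (n : nat) (up : bool) : 2 <= n ->
  if odd n then fiso (quot (G n) 2 (fence n.-1 up)) C2
  else fiso (quot (quot (G n) 2 (fence n.-1 up)) 2 C1) C2.
Proof.
move=> n_gt1; have G_bip := @G_quot_complete_bipartite n n_gt1 up.
have [x0 ev_x0] : exists x : G n, ~~ odd x by exists (Ordinal (double_gt0 n_gt1)).
have [y0 od_y0] : exists y : G n, odd y.
  have lt1 : 1 < n.*2 by lia.
  by exists (Ordinal lt1).
case: ifP => odd_n.
  apply: (complete_bipartite_fiso_C2 G_bip).
  apply: (levq_bij (@G_rle_lev n) (G_lower n_gt1)).
  - by move=> x y odd_xy; apply: (G_level_connected n_gt1 (p := odd x)); rewrite ?odd_n ?orbT.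
  - by exists x0.
  - by exists y0.
apply: complete_bipartite_quot_C1 G_bip _ _.
  by exists (qclass _ _ x0); rewrite (levq_qclass _ _ (@G_rle_lev n) (G_lower n_gt1)).
by exists (qclass _ _ y0); rewrite (levq_qclass _ _ (@G_rle_lev n) (G_lower n_gt1)).
Qed.
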